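(* There is an absolute constant $C>0$ such that the following holds. Let $n,d$ be positive integers and let $E$ be a nonempty family of subsets of $[n]=\{1,\dots,n\}$, each of size at most $d$. For every positive integer $p\le d-1$ there exists a non-adaptive group testing algorithm for $E$ consisting of $t\le C\,\frac{d}{p}\log|E|$ tests, i.e. pools $T_1,\dots,T_t\subseteq[n]$, which allows to discard all hyperedges $e\in E$ with $|e\setminus e^*|\ge p$, where $e^*$ is the defective hyperedge: for every $e^*\in E$ and every $e\in E$ with $|e\setminus e^*|\ge p$ one has $r(e)\neq r(e^* )$.
   Context: Group testing on a hypergraph: the set of items is $[n]$, and $E$ is a family of subsets of $[n]$ (hyperedges), exactly one of which, $e^*\in E$, is the unknown defective hyperedge. A test on a pool $T\subseteq[n]$ gives a positive response iff $T\cap e^*\neq\emptyset$. A non-adaptive algorithm with $t$ tests is a sequence of pools $T_1,\dots,T_t\subseteq[n]$ fixed in advance (all tested in parallel); for $f\in E$ its response vector is $r(f)=(r_1,\dots,r_t)\in\{0,1\}^t$ with $r_i=1$ iff $T_i\cap f\neq\emptyset$. A hyperedge $e$ can be discarded when $e^*$ is defective if the observed responses are inconsistent with $e$ being defective, i.e. $r(e)\neq r(e^* )$. Logarithms are to a fixed base (e.g. base 2). *)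

From mathcomp Require Import all_boot.
From Stdlib Require Import Reals.
Set Implicit Arguments. Unset Strict Implicit. Unset Printing Implicit Defensive.

(* Items are [n] = {0,...,n-1} (type 'I_n); hyperedges are {set 'I_n}. *)

Definition test_response (n : nat) (T : {set 'I_n}) (f : {set 'I_n}) : bool :=
  T :&: f != set0.

Definition response_vec (n t : nat) (T : 'I_t -> {set 'I_n}) (f : {set 'I_n})
  : {ffun 'I_t -> bool} :=
  [ffun i => test_response (T i) f].

Definition discards_far (n t : nat) (E : {set {set 'I_n}}) (p : nat)
  (T : 'I_t -> {set 'I_n}) : Prop :=
  forall estar e, estar \in E -> e \in E -> p <= #|e :\: estar| ->
    response_vec T e != response_vec T estar.

(* A random pool containing each item independently with probability 1/(2d)
   misses the defective hyperedge e* (of size at most d) with probability at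
   least 1/2, and then meets e \ e* (of size at least p) with probability at
   least p/(4d): it separates any far pair (e*, e) with probability at least
   p/(8d).  By averaging, some pool separates a p/(8d) fraction of the far
   pairs not yet separated, so t greedily chosen pools leave at most
   (1 - p/(8d))^t |E|^2 of them, and none once t > (8d/p) ln |E|^2. *)

From mathcomp Require Import all_boot zify.
From Stdlib Require Import Rbase Rfunctions Rtrigo_def Exp_prop Rpower ZArith Lra.
(* The Stdlib real libraries rebind [^] on [nat] to [Nat.pow]; restore [expn]. *)
Import ssrnat.
Set Implicit Arguments. Unset Strict Implicit. Unset Printing Implicit Defensive.

Lemma card_set_sum (T : finType) (A : {pred T}) (P : pred T) :
  #|[set x in A | P x]| = \sum_(x in A) P x.
Proof.
rewrite -sum1_card [LHS]big_mkcond [RHS]big_mkcond /=.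
by apply: eq_bigr => x _; rewrite !inE; case: (x \in A); case: (P x).
Qed.

Section Greedy.

Variables (H U : finType) (sep : H -> U -> bool) (p k : nat) (S : {set U}).
Hypothesis sep_often : forall s, s \in S -> p * #|H| <= k * #|[set h | sep h s]|.

Lemma exists_frequent_separator (h0 : H) (S' : {set U}) : S' \subset S ->
  exists h, p * #|S'| <= k * #|[set s in S' | sep h s]|.
Proof.
move=> sub.
pose D h := #|[set s in S' | sep h s]|.
have H_gt0 : 0 < #|H| by apply/card_gt0P; exists h0.
have [hmax maxD] := eq_bigmax D H_gt0.
exists hmax; rewrite -/(D hmax) -maxD.
have double_count : \sum_h D h = \sum_(s in S') #|[set h | sep h s]|.
  rewrite /D; under eq_bigr => h _ do rewrite card_set_sum.
  by rewrite exchange_big; apply: eq_bigr => s _; rewrite -card_set_sum.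
have : p * #|S'| * #|H| <= k * (\max_h D h) * #|H|.
  apply: (@leq_trans (k * \sum_h D h)).
    rewrite double_count big_distrr /= mulnAC mulnC -sum_nat_const.
    by apply: leq_sum => s /(subsetP sub) /sep_often.
  rewrite -mulnA leq_mul2l; apply/orP; right.
  have -> : (\max_h D h) * #|H| = \sum_(h : H) \max_h D h.
    by rewrite sum_nat_const mulnC.
  by apply: leq_sum => h _; apply: leq_bigmax.
by rewrite leq_pmul2r.
Qed.

Definition unseparated (hs : seq H) := [set s in S | all (fun h => ~~ sep h s) hs].

Lemma exists_small_unseparated (h0 : H) t :
  exists hs, size hs = t /\ k ^ t * #|unseparated hs| <= (k - p) ^ t * #|S|.
Proof.
elim: t => [|t [hs [size_hs IH]]].
  exists [::]; rewrite !mul1n; split=> //.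
  by apply/subset_leq_card/subsetP => s; rewrite inE => /andP[].
have sub : unseparated hs \subset S by apply/subsetP => s; rewrite inE => /andP[].
have [h Hh] := exists_frequent_separator h0 sub.
exists (h :: hs); split; first by rewrite /= size_hs.
have -> : unseparated (h :: hs) = unseparated hs :\: [set s | sep h s].
  by apply/setP => s; rewrite !inE /= andbCA andbA.
have partition := cardsID [set s | sep h s] (unseparated hs).
rewrite setIdE in Hh.
have step : k * #|unseparated hs :\: [set s | sep h s]| <= (k - p) * #|unseparated hs|.
  by rewrite -partition in Hh *; nia.
rewrite !expnS; have := leq_mul (leqnn (k - p)) IH; have := leq_mul step (leqnn (k ^ t)).
move: (k ^ t) ((k - p) ^ t) => kt kpt; nia.
Qed.

Lemma exists_separating_family (h0 : H) t : (k - p) ^ t * #|S| < k ^ t ->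
  exists hs : 'I_t -> H, forall s, s \in S -> exists i, sep (hs i) s.
Proof.
move=> small.
have [hs [size_hs small_uns]] := exists_small_unseparated h0 t.
have uns0 : unseparated hs = set0.
  have : k ^ t * #|unseparated hs| < k ^ t * 1.
    by rewrite muln1 (leq_ltn_trans small_uns small).
  by rewrite ltn_mul2l ltnS leqn0 cards_eq0 => /andP[_ /eqP].
exists (fun i => nth h0 hs i) => s sS.
have : s \notin unseparated hs by rewrite uns0 inE.
rewrite inE sS /= -has_predC => /(has_nthP h0)[i i_lt sep_i].
rewrite size_hs in i_lt; exists (Ordinal i_lt); exact: negbNE.
Qed.

End Greedy.

(* [expS_subn_le] and [exp_addn_le] are the Bernoulli-type bounds
   (1 - 1/M)^a >= 1 - a/M and (1 - 1/M)^b <= M/(M + b) for M = m + 1. *)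
Lemma expS_subn_le m a : m.+1 ^ a * (m.+1 - a) <= m ^ a * m.+1.
Proof.
elim: a => [|a IH]; first by rewrite subn0.
rewrite !expnS.
have := leq_mul (leqnn m) IH.
nia.
Qed.

Lemma exp_addn_le m b : m ^ b * (m.+1 + b) <= m.+1 ^ b * m.+1.
Proof.
elim: b => [|b IH]; first by rewrite addn0.
rewrite !expnS.
have := leq_mul (leqnn m.+1) IH.
nia.
Qed.

Lemma expS_le_double m a : 2 * a <= m.+1 -> m.+1 ^ a <= 2 * m ^ a.
Proof.
move=> small_a; have := expS_subn_le m a.
nia.
Qed.

Lemma exp_gap_lower m b p : p <= b -> p <= m.+1 ->
  p * m.+1 ^ b <= 2 * m.+1 * (m.+1 ^ b - m ^ b).
Proof.
move=> pb pm; have := exp_addn_le m b.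
nia.
Qed.

Lemma avoid_hit_fraction m a b c p : 2 * a <= m.+1 -> p <= b -> p <= m.+1 ->
  p * m.+1 ^ (a + b + c) <= 4 * m.+1 * (m ^ a * m.+1 ^ (b + c) - m ^ (a + b) * m.+1 ^ c).
Proof.
move=> small_a pb pm.
have avoid := expS_le_double small_a.
have hit := exp_gap_lower pb pm.
rewrite !expnD -mulnA mulnBr mulnA.
have := leq_mul (leq_mul avoid hit) (leqnn (m.+1 ^ c)).
move: (m.+1 ^ a) (m.+1 ^ b) (m.+1 ^ c) (m ^ a) (m ^ b) => Ma Mb Mc ma mb.
nia.
Qed.

Section Pools.

Variables n m : nat.

(* A uniform [h] draws the random pool of density 1/(m + 1): item [x] is in it
   iff [h x = 0]. *)
Definition pool (h : {ffun 'I_n -> 'I_m.+1}) : {set 'I_n} := [set x | h x == ord0].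

Lemma card_pools_avoiding (C : {set 'I_n}) :
  #|[set h | pool h :&: C == set0]| = m ^ #|C| * m.+1 ^ #|~: C|.
Proof.
pose F x := [pred i : 'I_m.+1 | (x \notin C) || (i != ord0)].
have -> : [set h | pool h :&: C == set0] = [set h in family F].
  apply/setP => h; rewrite !inE; apply/eqP/familyP => [avoid x | inF].
    rewrite inE; case: (boolP (x \in C)) => //= xC; apply/negP => /eqP hx0.
    by have := in_set0 x; rewrite -avoid !inE hx0 xC.
  apply/setP => x; rewrite !inE; have := inF x; rewrite inE.
  by case: (x \in C); rewrite ?andbF ?andbT //= => /negbTE.
have cardF_in x : x \in C -> #|F x| = m.
  move=> xC; rewrite (@eq_card _ _ (predC1 ord0)) => [|i]; last by rewrite !inE xC.
  by rewrite cardC1 card_ord.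
have cardF_out x : x \notin C -> #|F x| = m.+1.
  move=> xC; rewrite (@eq_card _ _ predT) => [|i]; last by rewrite !inE xC.
  by rewrite cardT size_enum_ord.
rewrite cardsE card_family foldrE big_map big_enum (bigID (mem C)).
rewrite (eq_bigr _ cardF_in) (eq_bigr _ cardF_out) !prod_nat_const.
by congr (_ * _ ^ _); apply: eq_card => x; rewrite inE.
Qed.

Lemma pools_separate_often (estar e : {set 'I_n}) p :
  2 * #|estar| <= m.+1 -> p <= #|e :\: estar| -> p <= m.+1 ->
  p * #|{ffun 'I_n -> 'I_m.+1}| <=
  4 * m.+1 * #|[set h | test_response (pool h) e != test_response (pool h) estar]|.
Proof.
move=> small_estar far pm.
set B := e :\: estar.
pose avoiding C := [set h : {ffun 'I_n -> 'I_m.+1} | pool h :&: C == set0].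
have avoidingS : avoiding (estar :|: B) \subset avoiding estar.
  by apply/subsetP => h; rewrite !inE setIUr setU_eq0 => /andP[].
have separating : avoiding estar :\: avoiding (estar :|: B) \subset
    [set h | test_response (pool h) e != test_response (pool h) estar].
  apply/subsetP => h; rewrite !inE /test_response setIUr setU_eq0.
  case/andP=> hitB avoidA; rewrite avoidA /= in hitB *.
  case/set0Pn: hitB => x; rewrite !inE => /and3P[hx _ ex].
  suff -> : pool h :&: e != set0 by [].
  by apply/set0Pn; exists x; rewrite !inE hx ex.
apply: leq_trans (leq_mul (leqnn _) (subset_leq_card separating)).
rewrite cardsD (setIidPr avoidingS) !card_pools_avoiding card_ffun !card_ord.
have disjB : estar :&: B = set0 by rewrite /B setDE setICA setICr setI0.
have card_AB : #|estar :|: B| = #|estar| + #|B| by rewrite cardsU disjB cards0 subn0.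
have := cardsC estar; have := cardsC (estar :|: B); rewrite card_ord card_AB.
set a := #|estar| in small_estar *; set b := #|B| in far *; set c := #|~: (estar :|: B)|.
move=> n_abc n_a; have -> : #|~: estar| = b + c by lia.
have -> : n = a + b + c by lia.
exact: avoid_hit_fraction.
Qed.

End Pools.

Definition far_pairs n (E : {set {set 'I_n}}) p : {set {set 'I_n} * {set 'I_n}} :=
  [set s | [&& s.1 \in E, s.2 \in E & p <= #|s.2 :\: s.1|]].

Lemma card_far_pairs n (E : {set {set 'I_n}}) p : #|far_pairs E p| <= #|E| ^ 2.
Proof.
rewrite expnS expn1 -cardsX; apply/subset_leq_card/subsetP => s.
by rewrite !inE => /and3P[-> ->].
Qed.

Lemma far_pairs_card_le1 n (E : {set {set 'I_n}}) p :
  0 < p -> #|E| <= 1 -> far_pairs E p = set0.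
Proof.
move=> p_gt0 /card_le1_eqP E_le1; apply/setP => -[estar e]; rewrite !inE /=.
apply/negbTE; apply/and3P => -[estarE eE].
by rewrite (E_le1 _ _ eE estarE) setDv cards0 leqNgt p_gt0.
Qed.

Lemma exists_discarding_pools n d p (E : {set {set 'I_n}}) t :
  0 < d -> p <= d -> (forall e, e \in E -> #|e| <= d) ->
  (8 * d - p) ^ t * #|far_pairs E p| < (8 * d) ^ t ->
  exists T : 'I_t -> {set 'I_n}, discards_far E p T.
Proof.
move=> d_gt0 pd small_E few_far.
pose m := (2 * d).-1; have Mm : m.+1 = 2 * d by rewrite prednK ?muln_gt0.
pose sep h (s : {set 'I_n} * {set 'I_n}) :=
  test_response (@pool n m h) s.2 != test_response (pool h) s.1.
have sep_often s : s \in far_pairs E p ->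
    p * #|{ffun 'I_n -> 'I_m.+1}| <= 8 * d * #|[set h | sep h s]|.
  rewrite inE => /and3P[estarE eE far].
  have -> : 8 * d = 4 * m.+1 by rewrite Mm mulnA.
  by apply: pools_separate_often; rewrite // Mm ?leq_mul2l ?small_E //; lia.
have [hs separated] := exists_separating_family sep_often [ffun=> ord0] few_far.
exists (fun i => pool (hs i)) => estar e estarE eE far.
have [i sep_i] : exists i, sep (hs i) (estar, e) by apply: separated; rewrite inE estarE eE.
by apply: contra_neq sep_i => /ffunP/(_ i); rewrite !ffunE.
Qed.

Section RealBounds.

Local Open Scope R_scope.

Lemma INR_expn a b : INR (a ^ b)%N = INR a ^ b.
Proof. by elim: b => [|b IH] //; rewrite expnS -multE mult_INR IH. Qed.

Lemma ln_le x y : 0 < x -> x <= y -> ln x <= ln y.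
Proof.
move=> x_gt0 /Rle_lt_or_eq_dec[xy | ->]; last exact: Rle_refl.
exact/Rlt_le/ln_increasing.
Qed.

Lemma pow_one_sub_mul_lt1 x N t : 0 < x < 1 -> 0 < N -> ln N < x * INR t ->
  (1 - x) ^ t * N < 1.
Proof.
move=> [x_gt0 x_lt1] N_gt0 large_t.
have le_exp : (1 - x) ^ t <= exp (- x * INR t).
  have -> : exp (- x * INR t) = exp (- x) ^ t.
    elim: t {large_t} => [|t IH]; first by rewrite Rmult_0_r exp_0.
    by rewrite S_INR /= -IH -exp_plus; f_equal; ring.
  by apply: pow_incr; have := exp_ineq1 (- x); lra.
have lt_invN : exp (- x * INR t) < / N.
  rewrite -[/ N]exp_ln ?ln_Rinv //; last exact: Rinv_0_lt_compat.
  by apply: exp_increasing; lra.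
have := Rmult_lt_compat_r N _ _ N_gt0 (Rle_lt_trans _ _ _ le_exp lt_invN).
by rewrite Rinv_l //; lra.
Qed.

Lemma exists_nat_ceil r : 0 <= r -> exists t : nat, r < INR t <= r + 1.
Proof.
move=> r_ge0; have [up_gt up_le] := archimed r.
exists (Z.to_nat (up r)); rewrite INR_IZR_INZ Z2Nat.id; first lra.
by apply: le_IZR; lra.
Qed.

Lemma exists_iteration_count k p N : (0 < p < k)%N -> (0 < N)%N ->
  exists t, ((k - p) ^ t * N < k ^ t)%N /\ INR t <= INR k / INR p * ln (INR N) + 1.
Proof.
move=> /andP[p_gt0 pk] N_gt0.
have [p_pos k_pos] : 0 < INR p /\ 0 < INR k by split; apply: (lt_INR 0); apply/ltP; lia.
have pk_lt : INR p < INR k by apply: lt_INR; apply/ltP.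
have lnN_ge0 : 0 <= ln (INR N).
  by rewrite -ln_1; apply: ln_le; [lra | apply: (le_INR 1); apply/leP].
set x := INR p / INR k.
have x_bounds : 0 < x < 1.
  split; first exact: Rdiv_lt_0_compat.
  apply: (Rmult_lt_reg_r (INR k)) => //.
  rewrite /x /Rdiv Rmult_1_l Rmult_assoc Rinv_l ?Rmult_1_r; lra.
set r := INR k / INR p * ln (INR N).
have [t [t_gt t_le]] : exists t : nat, r < INR t <= r + 1.
  by apply: exists_nat_ceil; apply: Rmult_le_pos => //; apply/Rlt_le/Rdiv_lt_0_compat.
exists t; split => //.
have large_t : ln (INR N) < x * INR t.
  have -> : ln (INR N) = x * r by rewrite /x /r; field; lra.
  by apply: Rmult_lt_compat_l; [case: x_bounds|].
apply/ltP/INR_lt; rewrite -multE mult_INR !INR_expn minus_INR; last by apply/leP; lia.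
have -> : INR k - INR p = INR k * (1 - x) by rewrite /x; field; lra.
rewrite Rpow_mult_distr Rmult_assoc -[X in _ < X]Rmult_1_r.
apply: Rmult_lt_compat_l; first exact: pow_lt.
by apply: pow_one_sub_mul_lt1 => //; apply: (lt_INR 0); apply/ltP.
Qed.

Lemma iteration_bound_le d p c t : (0 < p <= d)%N -> (1 < c)%N ->
  INR t <= INR (8 * d) / INR p * ln (INR (c ^ 2)) + 1 ->
  INR t <= 18 * (INR d / INR p) * ln (INR c).
Proof.
move=> /andP[p_gt0 pd] c_gt1.
have p_pos : 0 < INR p by apply: (lt_INR 0); apply/ltP.
have lnc_gt : / 2 < ln (INR c).
  by apply: (Rlt_le_trans _ _ _ ln_lt_2); apply: ln_le; [lra | apply: (le_INR 2); apply/leP].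
have dp_ge1 : 1 <= INR d / INR p.
  have pd_R : INR p <= INR d by apply/le_INR/leP.
  apply: (Rmult_le_reg_r (INR p)) => //.
  by rewrite Rmult_1_l /Rdiv Rmult_assoc Rinv_l ?Rmult_1_r //; lra.
rewrite -multE mult_INR INR_expn ln_pow; last by apply: (lt_INR 0); apply/ltP; lia.
set q := INR d / INR p in dp_ge1 *; set L := ln (INR c) in lnc_gt *.
have -> : INR 8 * INR d / INR p * (INR 2 * L) = 16 * q * L.
  by rewrite /q (INR_IZR_INZ 8) (INR_IZR_INZ 2) /=; field; lra.
nra.
Qed.

End RealBounds.

Theorem theorem2 :
  exists C : R, (0 < C)%R /\
  forall (n d : nat) (E : {set {set 'I_n}}),
    0 < n -> 0 < d -> E != set0 ->
    (forall e, e \in E -> #|e| <= d) ->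
    forall p : nat, 0 < p -> p <= d - 1 ->
    exists (t : nat) (T : 'I_t -> {set 'I_n}),
      (INR t <= C * (INR d / INR p) * ln (INR #|E|))%R /\
      discards_far E p T.
Proof.
exists 18%R; split; first lra.
move=> n d E _ d_gt0 E_neq0 small_E p p_gt0 pd.
have discarding := @exists_discarding_pools n d p E _ d_gt0 (leq_trans pd (leq_subr 1 d)) small_E.
case: (leqP #|E| 1) => [E_le1 | E_gt1].
  have [|T discT] := discarding 0; first by rewrite far_pairs_card_le1 // cards0.
  exists 0, T; split=> //.
  have -> : #|E| = 1 by apply/eqP; rewrite eqn_leq E_le1 card_gt0.
  by rewrite ln_1 Rmult_0_r; apply: Rle_refl.
have p_lt : 0 < p < 8 * d by rewrite p_gt0 /=; lia.
have E2_gt0 : 0 < #|E| ^ 2 by rewrite expn_gt0 card_gt0 E_neq0.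
have [t [few t_le]] := exists_iteration_count p_lt E2_gt0.
have [T discT] := discarding t (leq_ltn_trans (leq_mul (leqnn _) (card_far_pairs E p)) few).
exists t, T; split=> //.
by apply: iteration_bound_le t_le; rewrite ?p_gt0 ?E_gt1 //=; lia.
Qed.
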